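(* Let $(X,d,\phi)$ be a flow. Then \begin{align*} \overline{\mathrm{mdim}}_M(\phi,X,d)&=\limsup_{\epsilon\to0}\frac{1}{\log\frac1\epsilon}\sup_{x\in X}h_d(x,\epsilon,\phi),\\ \underline{\mathrm{mdim}}_M(\phi,X,d)&=\liminf_{\epsilon\to0}\frac{1}{\log\frac1\epsilon}\sup_{x\in X}h_d(x,\epsilon,\phi). \end{align*}
   Context: A flow $(X,d,\phi)$: $(X,d)$ compact metric, $\phi:X\times\mathbb{R}\to X$ continuous, $\phi_t(x)=\phi(x,t)$, $\phi_0=\mathrm{id}$, $\phi_{t+s}=\phi_t\circ\phi_s$. Let $d_t(x,y)=\max_{s\in[0,t]}d(\phi_sx,\phi_sy)$. For $Z\subset X$, $r_t(\phi,Z,d,\epsilon)$ is the minimal cardinality of a set $E\subset X$ such that every $x\in Z$ has some $y\in E$ with $d_t(x,y)<\epsilon$, and $r(\phi,Z,d,\epsilon)=\limsup_{t\to\infty}\frac1t\log r_t(\phi,Z,d,\epsilon)$. $\overline{\mathrm{mdim}}_M(\phi,X,d)=\limsup_{\epsilon\to0}\frac{r(\phi,X,d,\epsilon)}{\log(1/\epsilon)}$, $\underline{\mathrm{mdim}}_M(\phi,X,d)=\liminf_{\epsilon\to0}\frac{r(\phi,X,d,\epsilon)}{\log(1/\epsilon)}$. The local entropy function is $h_d(x,\epsilon,\phi)=\inf\{r(\phi,K,d,\epsilon):K \text{ a closed neighborhood of } x\}$. *)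

From HB Require Import structures.
From mathcomp Require Import all_boot all_order all_algebra.
From mathcomp Require Import all_classical all_reals all_analysis.
Set Implicit Arguments. Unset Strict Implicit. Unset Printing Implicit Defensive.
Import Order.TTheory GRing.Theory Num.Theory.
Import numFieldTopology.Exports numFieldNormedType.Exports.
Local Open Scope classical_set_scope.
Local Open Scope ring_scope.

Section FlowDefs.
Context {R : realType} {X : Type}.

Definition is_metric (d : X -> X -> R) : Prop :=
  [/\ (forall x y, 0 <= d x y),
      (forall x y, d x y = 0 <-> x = y),
      (forall x y, d x y = d y x) &
      (forall x y z, d x z <= d x y + d y z)].

Definition dball (d : X -> X -> R) (x : X) (r : R) : set X :=
  [set y | d x y < r].

Definition dopen (d : X -> X -> R) (U : set X) : Prop :=
  forall x, U x -> exists2 r : R, 0 < r & dball d x r `<=` U.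

Definition dclosed (d : X -> X -> R) (K : set X) : Prop := dopen d (~` K).

Definition dcompact (d : X -> X -> R) : Prop :=
  forall (I : Type) (U : I -> set X),
    (forall i, dopen d (U i)) -> (forall x, exists i, U i x) ->
    exists (n : nat) (f : 'I_n -> I), forall x, exists j, U (f j) x.

Definition is_flow (d : X -> X -> R) (phi : X -> R -> X) : Prop :=
  [/\ (forall x t (e : R), 0 < e -> exists2 del : R, 0 < del &
          forall y s, d x y < del -> `|t - s| < del -> d (phi x t) (phi y s) < e),
      (forall x, phi x 0 = x) &
      (forall x t s, phi x (t + s) = phi (phi x s) t)].

Definition dT (d : X -> X -> R) (phi : X -> R -> X) (t : R) (x y : X) : R :=
  sup [set d (phi x s) (phi y s) | s in `[0, t]].

(* r_t(phi,Z,d,eps): minimal cardinality of an (t,eps)-spanning set E of Z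
   (+oo if no finite one exists) *)
Definition rT (phi : X -> R -> X) (Z : set X) (d : X -> X -> R) (eps t : R) : \bar R :=
  ereal_inf [set (n%:R)%:E | n in
    [set n : nat | exists E : 'I_n -> X,
       forall x, Z x -> exists i, dT d phi t x (E i) < eps]].

Definition elog (a : \bar R) : \bar R :=
  match a with
  | EFin r => if 0 < r then (ln r)%:E else -oo%E
  | EPInf => +oo%E
  | ENInf => -oo%E
  end.

Definition rate (phi : X -> R -> X) (Z : set X) (d : X -> X -> R) (eps : R) : \bar R :=
  limf_esup (fun t : R => ((t^-1)%:E * elog (rT phi Z d eps t))%E) +oo.

Definition mdimM_upper (phi : X -> R -> X) (d : X -> X -> R) : \bar R :=
  limf_esup (fun eps : R => (rate phi setT d eps * ((ln (eps^-1))^-1)%:E)%E) 0^'+.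

Definition mdimM_lower (phi : X -> R -> X) (d : X -> X -> R) : \bar R :=
  limf_einf (fun eps : R => (rate phi setT d eps * ((ln (eps^-1))^-1)%:E)%E) 0^'+.

Definition closed_nbhd (d : X -> X -> R) (x : X) (K : set X) : Prop :=
  dclosed d K /\ exists2 r : R, 0 < r & dball d x r `<=` K.

Definition hloc (d : X -> X -> R) (x : X) (eps : R) (phi : X -> R -> X) : \bar R :=
  ereal_inf [set rate phi K d eps | K in closed_nbhd d x].

End FlowDefs.

(* Taking K = X in the definition of h_d shows sup_x h_d(x, eps) <= r(phi, X, d, eps).
   Conversely, if sup_x h_d(x, eps) < c, every point has a closed neighbourhood K_x
   with r(phi, K_x, d, eps) < c; by compactness finitely many, say n, of them cover X.
   Gluing (t, eps)-spanning sets of the K_x gives r_t(X) <= n e^{ct} for large t,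
   whence r(phi, X, d, eps) <= c.  Thus r(phi, X, d, eps) = sup_x h_d(x, eps) for
   every eps, and both formulas follow by unfolding the metric mean dimensions. *)

From HB Require Import structures.
From mathcomp Require Import all_boot all_order all_algebra.
From mathcomp Require Import all_classical all_reals all_analysis.
From mathcomp Require Import lra.
Set Implicit Arguments. Unset Strict Implicit. Unset Printing Implicit Defensive.
Import Order.TTheory GRing.Theory Num.Theory.
Import numFieldTopology.Exports numFieldNormedType.Exports.
Local Open Scope classical_set_scope.
Local Open Scope ring_scope.

Section ExtendedReals.
Context {R : realType}.
Local Open Scope ereal_scope.

Lemma lee_gt_fin (x y : \bar R) : (forall c : R, y < c%:E -> x <= c%:E) -> x <= y.
Proof.
case: y => [r| |] ygt; last 2 first.
- by rewrite leey.
- by rewrite (eq_ninfty (fun c => ygt c (ltNyr c))).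
apply/lee_addgt0Pr => e e0; rewrite -EFinD; apply: ygt.
by rewrite lte_fin ltrDl.
Qed.

Lemma limf_esup_lt_near (T : choiceType) (X : filteredType T)
    (F : set_system X) {FF : Filter F} (f : X -> \bar R) (c : \bar R) :
  limf_esup f F < c -> \forall x \near F, f x < c.
Proof.
move=> /ereal_inf_lt [_ [V FV <-] Vc]; apply: (filterS (F := F)) FV => x Vx.
by apply: le_lt_trans Vc; apply: ereal_sup_ubound; exists x.
Qed.

Lemma limf_esup_le_near (T : choiceType) (X : filteredType T)
    (F : set_system X) (f : X -> \bar R) (c : \bar R) :
  (\forall x \near F, f x <= c) -> limf_esup f F <= c.
Proof.
move=> Fc; apply: le_trans (ereal_inf_lbound _) _; first by exists [set x | f x <= c].
by apply: ge_ereal_sup => _ [x fxc <-].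
Qed.

Lemma le_elog : {homo @elog R : a b / a <= b}.
Proof.
move=> [r| |] [s| |] //= rs; rewrite ?leey ?leNye //.
rewrite lee_fin in rs; case: ifPn => r0; last by rewrite leNye.
have s0 := lt_le_trans r0 rs.
by rewrite s0 lee_fin ler_ln.
Qed.

Lemma elog_lt_expR (t c : R) (a : \bar R) : (0 < t)%R ->
  (t^-1)%:E * elog a < c%:E -> a < (expR (c * t))%:E.
Proof.
move=> t0; case: a => [r| |] /=.
- case: ifPn => r0; last by rewrite lte_fin (le_lt_trans _ (expR_gt0 _)) // leNgt.
  rewrite -EFinM lte_fin mulrC ltr_pdivrMr // => lnr_lt.
  by rewrite lte_fin -(lnK r0) ltr_expR.
- by rewrite mulry gtr0_sg ?invr_gt0 // mul1e.
- by rewrite ltNye.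
Qed.

Lemma elog_natr_expR_le (n : nat) (c t : R) : (0 < t)%R ->
  (t^-1)%:E * elog (n%:R * expR (c * t))%:E <= (t^-1 * ln n%:R + c)%:E.
Proof.
move=> t0; case: n => [|n].
  by rewrite /= mul0r ltxx mulrNy gtr0_sg ?invr_gt0 // mul1e leNye.
rewrite /= mulr_gt0 ?expR_gt0 ?ltr0Sn // -EFinM lee_fin.
rewrite lnM ?posrE ?expR_gt0 ?ltr0Sn // expRK mulrDr.
by rewrite mulrCA mulVf ?mulr1 // gt_eqF.
Qed.

End ExtendedReals.

Section SpanningSets.
Context {R : realType} {X : Type} (d : X -> X -> R) (phi : X -> R -> X).

Definition spanning (I : Type) (E : I -> X) (Z : set X) (eps t : R) : Prop :=
  forall x, Z x -> exists i, dT d phi t x (E i) < eps.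

Local Open Scope ereal_scope.

Definition rT_growth (Z : set X) (eps t : R) : \bar R :=
  (t^-1)%:E * elog (rT phi Z d eps t).

Lemma rateE Z eps : rate phi Z d eps = limf_esup (rT_growth Z eps) +oo%R.
Proof. by []. Qed.

Lemma rT_le_card (T : finType) (E : T -> X) Z eps t :
  spanning E Z eps t -> rT phi Z d eps t <= #|T|%:R%:E.
Proof.
move=> EZ; apply: ereal_inf_lbound; exists #|T| => //.
exists (E \o enum_val) => x /EZ [i Ei]; exists (enum_rank i).
by rewrite /= enum_rankK.
Qed.

Lemma rT_lt_spanning Z eps t (c : R) : rT phi Z d eps t < c%:E ->
  exists N : nat, (N%:R < c)%R /\ exists E : 'I_N -> X, spanning E Z eps t.
Proof. by move=> /ereal_inf_lt [_ [N EN <-]]; rewrite lte_fin; exists N. Qed.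

Lemma rT_cover_le n (K : 'I_n -> set X) Z eps t (b : R) :
  (forall x, Z x -> exists j, K j x) ->
  (forall j, rT phi (K j) d eps t < b%:E) ->
  rT phi Z d eps t <= (n%:R * b)%:E.
Proof.
move=> cover Kb.
have /choice [E EK] : forall j, exists E : {N : nat & 'I_N -> X},
    ((projT1 E)%:R < b)%R /\ spanning (projT2 E) (K j) eps t.
  by move=> j; have [N [Nb [E EK]]] := rT_lt_spanning (Kb j); exists (Tagged _ E).
pose T := {j : 'I_n & 'I_(projT1 (E j))}.
apply: le_trans (rT_le_card (E := fun p : T => projT2 (E (tag p)) (tagged p)) _) _.
  move=> x /cover [j Kjx]; have [i Ei] := (EK j).2 x Kjx.
  by exists (Tagged (fun j => 'I_(projT1 (E j))) i).
rewrite lee_fin card_tagged sumnE big_map natr_sum big_enum /=.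
have Eb j : (#|'I_(projT1 (E j))|%:R <= b)%R by rewrite card_ord ltW // (EK j).1.
apply: le_trans (ler_sum _ (fun j _ => Eb j)) _.
by rewrite sumr_const card_ord mulr_natl.
Qed.

Lemma rT_growth_cover_le n (K : 'I_n -> set X) Z eps t (c : R) : (0 < t)%R ->
  (forall x, Z x -> exists j, K j x) ->
  (forall j, rT_growth (K j) eps t < c%:E) ->
  rT_growth Z eps t <= (t^-1 * ln n%:R + c)%:E.
Proof.
move=> t0 cover Kc; apply: le_trans _ (elog_natr_expR_le n c t0).
apply: lee_wpmul2l; first by rewrite lee_fin invr_ge0 ltW.
apply/le_elog/(rT_cover_le cover) => j.
exact: elog_lt_expR t0 (Kc j).
Qed.

Lemma rate_cover_le n (K : 'I_n -> set X) Z eps (c : R) :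
  (forall x, Z x -> exists j, K j x) ->
  (forall j, rate phi (K j) d eps < c%:E) ->
  rate phi Z d eps <= c%:E.
Proof.
move=> cover Kc; apply/lee_addgt0Pr => e e0; rewrite rateE.
have Kc_near : \forall t \near +oo%R, forall j, rT_growth (K j) eps t < c%:E.
  by apply: filter_forall => j; apply: limf_esup_lt_near; rewrite -rateE.
apply: limf_esup_le_near; near=> t.
have t0 : (0 < t)%R by near: t; apply: nbhs_pinfty_gt; rewrite num_real.
have Kc_t : forall j, rT_growth (K j) eps t < c%:E by near: t.
apply: le_trans (rT_growth_cover_le t0 cover Kc_t) _.
rewrite -EFinD lee_fin addrC lerD2l mulrC ler_pdivrMr //.
have : (ln n%:R / e < t)%R by near: t; apply: nbhs_pinfty_gt; rewrite num_real.
by rewrite ltr_pdivrMr // mulrC => /ltW.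
Unshelve. all: by end_near.
Qed.

End SpanningSets.

Section LocalEntropy.
Context {R : realType} {X : Type} (d : X -> X -> R) (phi : X -> R -> X).
Hypotheses (d_metric : is_metric d) (d_compact : dcompact d).

Lemma dball_center x r : 0 < r -> dball d x r x.
Proof. by case: d_metric => _ dxx _ _ r0; rewrite /dball /= ((dxx x x).2 erefl). Qed.

Lemma dball_open x r : dopen d (dball d x r).
Proof.
case: d_metric => _ _ _ tri y xy; exists (r - d x y); first by rewrite subr_gt0.
move=> z yz; apply: le_lt_trans (tri x y z) _.
by move: xy yz; rewrite /dball /= => xy yz; lra.
Qed.

Local Open Scope ereal_scope.

Lemma sup_hloc_le_rate eps :
  ereal_sup [set hloc d x eps phi | x in [set: X]] <= rate phi setT d eps.
Proof.
apply: ge_ereal_sup => _ [x _ <-]; apply: ereal_inf_lbound.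
by exists setT => //; split; [move=> y /(_ I) | exists 1%R].
Qed.

Lemma rate_le_sup_hloc eps :
  rate phi setT d eps <= ereal_sup [set hloc d x eps phi | x in [set: X]].
Proof.
apply: lee_gt_fin => c hloc_lt_c.
have /choice [nb nbP] : forall x, exists nb : set X * R,
    [/\ (0 < nb.2)%R, dball d x nb.2 `<=` nb.1 & rate phi nb.1 d eps < c%:E].
  move=> x; have : hloc d x eps phi < c%:E.
    by apply: le_lt_trans hloc_lt_c; apply: ereal_sup_ubound; exists x.
  by move=> /ereal_inf_lt [_ [K [_ [r r0 rK]] <-] Kc]; exists (K, r).
have [n [x cover]] : exists n (x : 'I_n -> X),
    forall y, exists j, dball d (x j) (nb (x j)).2 y.
  apply: (d_compact (U := fun y => dball d y (nb y).2)) => [y|y]; first exact: dball_open.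
  by exists y; apply: dball_center; case: (nbP y).
apply: (rate_cover_le (K := fun j => (nb (x j)).1)) => [y _|j].
  by have [j xj_y] := cover y; exists j; case: (nbP (x j)) => _ + _; apply.
by case: (nbP (x j)).
Qed.

Lemma rate_setT_eq_sup_hloc eps :
  rate phi setT d eps = ereal_sup [set hloc d x eps phi | x in [set: X]].
Proof. by apply/eqP; rewrite eq_le rate_le_sup_hloc sup_hloc_le_rate. Qed.

End LocalEntropy.

Theorem theorem1p4 (R : realType) (X : Type) (d : X -> X -> R) (phi : X -> R -> X) :
  is_metric d -> dcompact d -> is_flow d phi ->
  mdimM_upper phi d =
    limf_esup (fun eps : R =>
      (((ln (eps^-1))^-1)%:E * ereal_sup [set hloc d x eps phi | x in [set: X]])%E) 0^'+ /\
  mdimM_lower phi d =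
    limf_einf (fun eps : R =>
      (((ln (eps^-1))^-1)%:E * ereal_sup [set hloc d x eps phi | x in [set: X]])%E) 0^'+.
Proof.
move=> d_metric d_compact _; rewrite /mdimM_upper /mdimM_lower.
suff -> : (fun eps => rate phi setT d eps * ((ln eps^-1)^-1)%:E)%E =
    (fun eps => ((ln eps^-1)^-1)%:E * ereal_sup [set hloc d x eps phi | x in setT])%E
  by [].
apply/funext => eps.
by rewrite muleC (rate_setT_eq_sup_hloc phi d_metric d_compact).
Qed.
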